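(* Let $Q=\{\bm{x}\in\mathbb{R}^n: A\bm{x}\le\bm{b},\ B\bm{x}\le\bm{d}\}$ be a polytope, where all entries of the matrix $A$ are non-negative and all entries of the matrix $B$ are non-positive, and circuits of $Q$ are taken with respect to this system. Then every circuit $\bm{c}\in\mathbb{R}^n$ of $Q$ with $\bm{c}\ge\bm{0}$ or $\bm{c}\le\bm{0}$ has exactly one non-zero coordinate.
   Context: Circuits: for a polytope $P=\{\bm{x}: D\bm{x}\le \bm{f}\}$ given by a fixed linear system, a nonzero vector $\bm{g}$ is a circuit of $P$ if $\operatorname{supp}(D\bm{g})$ is inclusion-minimal among the sets $\operatorname{supp}(D\bm{y})$ with $\bm{y}\neq\bm{0}$. Here $D$ is the matrix obtained by stacking $A$ over $B$. *)

From HB Require Import structures.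
From mathcomp Require Import all_boot all_order all_algebra.
Set Implicit Arguments. Unset Strict Implicit. Unset Printing Implicit Defensive.
Import Order.TTheory GRing.Theory Num.Theory.
Local Open Scope ring_scope.

Definition vle (R : realFieldType) (m : nat) (u v : 'cV[R]_m) : Prop :=
  forall i : 'I_m, u i 0 <= v i 0.

Definition polyhedron (R : realFieldType) (m n : nat) (D : 'M[R]_(m, n))
  (f : 'cV[R]_m) : 'cV[R]_n -> Prop :=
  fun x => vle (D *m x) f.

Definition is_polytope (R : realFieldType) (n : nat) (P : 'cV[R]_n -> Prop) : Prop :=
  (exists x, P x) /\
  (exists M : R, forall x, P x -> forall i : 'I_n, `|x i 0| <= M).

Definition supp (R : realFieldType) (m : nat) (v : 'cV[R]_m) : {set 'I_m} :=
  [set i | v i 0 != 0].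

Definition is_circuit (R : realFieldType) (m n : nat) (D : 'M[R]_(m, n))
  (g : 'cV[R]_n) : Prop :=
  g != 0 /\
  forall y : 'cV[R]_n, y != 0 -> supp (D *m y) \subset supp (D *m g) ->
    supp (D *m y) = supp (D *m g).

(** Each row of [col_mx A B] has entries of one sign, so for a sign-definite [c]
    every row of [D := col_mx A B] is sign-coherent with [c]: if [(D c)_i = 0]
    then row [i] vanishes on the whole support of [c].  Pick [j] in the support of [c];
    subtracting a suitable multiple of the unit vector [e_j] from [c] kills one
    more entry of [D c] without creating new ones, so by minimality of the
    circuit [c] is itself a multiple of [e_j].  Column [j] of [D] is nonzero
    because the polytope is bounded, which provides the entry to kill. *)

From mathcomp Require Import all_boot all_order all_algebra lra.
Set Implicit Arguments.
Unset Strict Implicit.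
Unset Printing Implicit Defensive.

Import Order.TTheory GRing.Theory Num.Theory.
Local Open Scope ring_scope.

Section Circuits.

Variable R : realFieldType.

Lemma supp_eq0 m (v : 'cV[R]_m) : (supp v == set0) = (v == 0).
Proof.
apply/eqP/eqP => [v0 | ->]; last by apply/setP => k; rewrite !inE mxE eqxx.
apply/matrixP => k l; rewrite (ord1 l) mxE.
by apply/eqP; apply: contraFT (in_set0 k); rewrite -v0 inE.
Qed.

Lemma sum_sign_coherent_eq0 {I : finType} {F : I -> R} :
  (forall k, 0 <= F k) \/ (forall k, F k <= 0) ->
  \sum_k F k = 0 -> forall k, F k = 0.
Proof.
have nneg_eq0 (G : I -> R) : (forall k, 0 <= G k) -> \sum_k G k = 0 ->
    forall k, G k = 0 by move=> hG G0 k; apply: (psumr_eq0P _ G0).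
case=> hF sum0 k; first exact: nneg_eq0.
apply/eqP; rewrite -oppr_eq0; apply/eqP; move: k; apply: nneg_eq0.
  by move=> k; rewrite oppr_ge0.
by rewrite sumrN sum0 oppr0.
Qed.

Variables m n : nat.
Implicit Types (D : 'M[R]_(m, n)) (c v : 'cV[R]_n).

Definition sign_coherent D c :=
  forall i, (forall k, 0 <= D i k * c k 0) \/ (forall k, D i k * c k 0 <= 0).

Lemma sign_coherentN D c : sign_coherent D c -> sign_coherent D (- c).
Proof.
move=> hc i; case: (hc i) => hs; [right|left] => k;
  by rewrite mxE mulrN ?oppr_le0 ?oppr_ge0.
Qed.

Lemma sign_coherent_row_eq0 {D c i j} :
  sign_coherent D c -> (D *m c) i 0 = 0 -> c j 0 != 0 -> D i j = 0.
Proof.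
move=> hc; rewrite mxE => /(sum_sign_coherent_eq0 (hc i))/(_ j)/eqP.
by rewrite mulf_eq0 => /orP[/eqP //|/eqP ->]; rewrite eqxx.
Qed.

Lemma polytope_mulmx_eq0 D (f : 'cV[R]_m) v :
  is_polytope (polyhedron D f) -> D *m v = 0 -> v = 0.
Proof.
move=> [[x Px] [M hM]] Dv0; apply/eqP; rewrite -supp_eq0.
apply/eqP/setP => i; rewrite !inE; apply/negbTE/negP => vi0.
(* Moving from [x] along the kernel direction [v] pushes coordinate [i] past [M]. *)
pose y := x + ((2 * M + 1) / v i 0) *: v.
have Py : polyhedron D f y by rewrite /polyhedron /y mulmxDr -scalemxAr Dv0 scaler0 addr0.
have := hM _ Py i; rewrite /y !mxE divfK // => /ler_normlP[_ hy].
have /ler_normlP[hx _] := hM _ Px i.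
by move: hx hy; clear; lra.
Qed.

Lemma sign_coherent_circuit_supp1 D c :
  (forall v, D *m v = 0 -> v = 0) -> is_circuit D c -> sign_coherent D c ->
  #|supp c| = 1%N.
Proof.
move=> Dinj [c0 cmin] hc.
have [j] : exists j, j \in supp c by apply/set0Pn; rewrite supp_eq0.
rewrite inE => cj.
pose e : 'cV[R]_n := delta_mx j 0.
have [i Dij] : exists i, D i j != 0.
  have : supp (D *m e) != set0.
    rewrite supp_eq0; apply/eqP => /Dinj/matrixP/(_ j 0)/eqP.
    by rewrite !mxE !eqxx oner_eq0.
  by case/set0Pn => i; rewrite inE /e -colE mxE; exists i.
have Dci : (D *m c) i 0 != 0.
  by apply: contra Dij => /eqP Dci0; rewrite (sign_coherent_row_eq0 hc Dci0 cj).
pose z := c - ((D *m c) i 0 / D i j) *: e.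
have Dz k : (D *m z) k 0 = (D *m c) k 0 - (D *m c) i 0 / D i j * D k j.
  by rewrite mulmxBr -scalemxAr /e -colE !mxE.
have supp_Dz : supp (D *m z) \subset supp (D *m c).
  apply/subsetP => k; rewrite !inE; apply: contra => /eqP Dck0.
  by rewrite Dz Dck0 (sign_coherent_row_eq0 hc Dck0 cj) mulr0 subrr.
have z0 : z = 0.
  apply/eqP; apply: contraT => z_neq0.
  move/setP/(_ i): (cmin _ z_neq0 supp_Dz).
  by rewrite !inE Dz divfK // subrr eqxx Dci.
suff -> : supp c = [set j] by rewrite cards1.
apply/setP => k; rewrite !inE; apply/idP/eqP => [ck | -> //].
apply/eqP; apply: contraNT ck => kj.
move/matrixP/(_ k 0): z0; rewrite !mxE (negbTE kj) mulr0 subr0 => ->.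
by rewrite eqxx.
Qed.

End Circuits.

Lemma col_mx_sign_coherent (R : realFieldType) m1 m2 n
    (A : 'M[R]_(m1, n)) (B : 'M[R]_(m2, n)) (c : 'cV[R]_n) :
  (forall i j, 0 <= A i j) -> (forall i j, B i j <= 0) ->
  vle 0 c \/ vle c 0 -> sign_coherent (col_mx A B) c.
Proof.
move=> hA hB.
have nneg_coherent (v : 'cV[R]_n) : vle 0 v -> sign_coherent (col_mx A B) v.
  move=> v_ge0 i; have {}v_ge0 k : 0 <= v k 0 by move: (v_ge0 k); rewrite mxE.
  by case: (split_ordP i) => i' ->; [left|right] => k;
    rewrite ?col_mxEu ?col_mxEd ?mulr_ge0 ?mulr_le0_ge0.
case=> [|c_le0]; first exact: nneg_coherent.
rewrite -[c]opprK; apply/sign_coherentN/nneg_coherent => k.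
by rewrite !mxE oppr_ge0; move: (c_le0 k); rewrite mxE.
Qed.

Theorem lemma1 (R : realFieldType) (n m1 m2 : nat)
  (A : 'M[R]_(m1, n)) (B : 'M[R]_(m2, n)) (b : 'cV[R]_m1) (d : 'cV[R]_m2) :
  (forall i j, 0 <= A i j) ->
  (forall i j, B i j <= 0) ->
  is_polytope (polyhedron (col_mx A B) (col_mx b d)) ->
  forall c : 'cV[R]_n,
    is_circuit (col_mx A B) c ->
    (vle 0 c \/ vle c 0) ->
    #|supp c| = 1%N.
Proof.
move=> hA hB hP c hc hsgn.
apply: sign_coherent_circuit_supp1 hc (col_mx_sign_coherent hA hB hsgn).
by move=> v; apply: polytope_mulmx_eq0 hP.
Qed.
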